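(* Let $F_0,F_1$ be an affine pair of communicating SR-machines, and for $j=0,1$ let $k_j=|K_j|$ be the number of states of $F_j$. If there is a reachable global state $((p_0,p_1),(x_\alpha,\lambda))$ with $|x_\alpha|\ge k_0(k_1-1)+1$, then $F_1$ has a receive cycle and $F_0$ has a send cycle.
   Context: A pair of communicating SR-machines is a CFSM protocol with communication graph having nodes $\{0,1\}$ and two edges $\alpha$ (from $0$ to $1$) and $\beta$ (from $1$ to $0$), disjoint finite message alphabets $M_\alpha,M_\beta$, and two finite state machines $F_j=(K_j,\Sigma_j,T_j,h_j)$, $j=0,1$, with $\Sigma_0=\{-b:b\in M_\alpha\}\cup\{+b:b\in M_\beta\}$, $\Sigma_1=\{-b:b\in M_\beta\}\cup\{+b:b\in M_\alpha\}$, $K_j$ finite, $h_j\in K_j$ initial, $T_j\subseteq K_j\times\Sigma_j\times K_j$ (transitions written $p\xrightarrow{e}q$; $+b$ = receive, $-b$ = send; $p\xrightarrow{w}q$ for $w\in\Sigma_j^*$ means a directed path labelled $w$). A state is a send state if it has no outgoing $+b$ transition and a receive state if it has no outgoing $-b$ transition. $F_j$ is an SR-machine if every state is a send or a receive state, its transition diagram is strongly connected, and $p\xrightarrow{e}q_1$, $p\xrightarrow{e}q_2$ imply $q_1=q_2$. Global states are $((p_0,p_1),(x_\alpha,x_\beta))$ with $p_j\in K_j$, $x_\alpha\in M_\alpha^*$, $x_\beta\in M_\beta^*$; initially $((h_0,h_1),(\lambda,\lambda))$. A step is either a send: a machine performs $p\xrightarrow{-b}q$ and $b$ is appended to the end of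 the channel on which it sends ($\alpha$ for $F_0$, $\beta$ for $F_1$), or a receive: a machine performs $p\xrightarrow{+b}q$ and $b$ is removed from the front of its input channel ($\beta$ for $F_0$, $\alpha$ for $F_1$), which must begin with $b$; the other machine's state is unchanged. Reachable means reachable from the initial global state by finitely many steps. For $w\in\Sigma_0^*\cup\Sigma_1^*$, $\pi_\alpha(w)\in M_\alpha^*$ (resp. $\pi_\beta(w)\in M_\beta^*$) is the string of message symbols from $M_\alpha$ (resp. $M_\beta$) occurring in $w$, in order, with signs removed. Let $\mathbf Z_j=\{(\pi_\alpha(w),\pi_\beta(w)): h_j\xrightarrow{w}h_j \text{ in } F_j\}$; the pair is affine if $\mathbf Z_0=\mathbf Z_1$. A send cycle (resp. receive cycle) of $F_j$ is a directed cycle in its transition diagram all of whose labels are of the form $-b$ (resp. $+b$). *)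

From mathcomp Require Import all_boot.
Set Implicit Arguments. Unset Strict Implicit. Unset Printing Implicit Defensive.

(* For F_0: S = M_alpha, R = M_beta.  For F_1: S = M_beta, R = M_alpha.
   Using two distinct types makes the alphabets disjoint by construction. *)
Inductive act (S R : Type) := Snd of S | Rcv of R.
Arguments Snd {S R}. Arguments Rcv {S R}.

Section Machine.
Variables (K : finType) (S R : Type) (T : K -> act S R -> K -> Prop).

Inductive walk : K -> seq (act S R) -> K -> Prop :=
| walk_nil p : walk p [::] p
| walk_cons p e q w r : T p e q -> walk q w r -> walk p (e :: w) r.

Definition send_state (p : K) : Prop := forall (r : R) q, ~ T p (Rcv r) q.
Definition recv_state (p : K) : Prop := forall (s : S) q, ~ T p (Snd s) q.

Definition SR_machine : Prop :=
  [/\ forall p, send_state p \/ recv_state p,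
      forall p q, exists w, walk p w q &
      forall p e q1 q2, T p e q1 -> T p e q2 -> q1 = q2].

Definition sends (w : seq (act S R)) : seq S :=
  pmap (fun e => if e is Snd s then Some s else None) w.
Definition recvs (w : seq (act S R)) : seq R :=
  pmap (fun e => if e is Rcv r then Some r else None) w.

Definition send_cycle : Prop :=
  exists (p : K) (w : seq S), w <> [::] /\ walk p (map Snd w) p.
Definition recv_cycle : Prop :=
  exists (p : K) (w : seq R), w <> [::] /\ walk p (map Rcv w) p.
End Machine.

Section Pair.
Variables (Ma Mb : finType) (K0 K1 : finType) (h0 : K0) (h1 : K1)
  (T0 : K0 -> act Ma Mb -> K0 -> Prop) (T1 : K1 -> act Mb Ma -> K1 -> Prop).

Definition Z0 (x : seq Ma) (y : seq Mb) : Prop :=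
  exists w, walk T0 h0 w h0 /\ sends w = x /\ recvs w = y.
Definition Z1 (x : seq Ma) (y : seq Mb) : Prop :=
  exists w, walk T1 h1 w h1 /\ recvs w = x /\ sends w = y.

Definition affine : Prop := forall x y, Z0 x y <-> Z1 x y.

Definition gstate : Type := ((K0 * K1) * (seq Ma * seq Mb))%type.

Inductive gstep : gstate -> gstate -> Prop :=
| step_send0 p0 q0 p1 a xa xb :
    T0 p0 (Snd a) q0 -> gstep ((p0, p1), (xa, xb)) ((q0, p1), (rcons xa a, xb))
| step_recv0 p0 q0 p1 b xa xb :
    T0 p0 (Rcv b) q0 -> gstep ((p0, p1), (xa, b :: xb)) ((q0, p1), (xa, xb))
| step_send1 p0 p1 q1 b xa xb :
    T1 p1 (Snd b) q1 -> gstep ((p0, p1), (xa, xb)) ((p0, q1), (xa, rcons xb b))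
| step_recv1 p0 p1 q1 a xa xb :
    T1 p1 (Rcv a) q1 -> gstep ((p0, p1), (a :: xa, xb)) ((p0, q1), (xa, xb)).

Inductive reachable : gstate -> Prop :=
| reach_init : reachable ((h0, h1), ([::], [::]))
| reach_step g g' : reachable g -> gstep g g' -> reachable g'.
End Pair.

(* A reachable configuration is a pair of walks u0 : h0 -> p0 and u1 : h1 -> p1
   whose projections are tied together by the channel contents.  Closing u0 by a
   return walk v0 with |v0| < k0 and applying affinity yields a closed walk of F1 at
   h1 with the same projections; as F1 is a deterministic SR-machine, that walk
   extends u1 by a walk receiving all of x_alpha while sending fewer than k0
   symbols.  Some block of consecutive receives then has length at least k1, and by
   pigeonhole on states it contains a receive cycle.  Pumping this cycle inside a
   closed walk of F1 and transporting back by affinity gives closed walks of F0 with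
   arbitrarily many sends but a bounded number of receives, hence a send cycle. *)

From mathcomp Require Import all_boot zify.
From Stdlib Require Import Classical.

Set Implicit Arguments. Unset Strict Implicit. Unset Printing Implicit Defensive.

Section Walks.
Variables (K : finType) (S R : Type) (T : K -> act S R -> K -> Prop).

Lemma walk_cat p x r y q : walk T p x r -> walk T r y q -> walk T p (x ++ y) q.
Proof. by elim=> //= p' e q' w r' Te _ IHw /IHw; apply: walk_cons Te. Qed.

Lemma walk_consE p e w q : walk T p (e :: w) q -> exists2 q', T p e q' & walk T q' w q.
Proof. by move=> W; inversion W; eexists; eauto. Qed.

Lemma walk_split p x y q : walk T p (x ++ y) q ->
  exists r, walk T p x r /\ walk T r y q.
Proof.
elim: x p => [|e x IHx] p /=; first by exists p; split=> //; constructor.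
case/walk_consE=> q' Te Wxy.
have [r [Wx Wy]] := IHx _ Wxy.
by exists r; split=> //; apply: walk_cons Te Wx.
Qed.

Lemma walk_rcons p w r e q : walk T p w r -> T r e q -> walk T p (rcons w e) q.
Proof.
by move=> Ww Te; rewrite -cats1; apply: (walk_cat Ww); apply: walk_cons Te _; constructor.
Qed.

Lemma walk_iter p w n : walk T p w p -> walk T p (flatten (nseq n w)) p.
Proof. by move=> Ww; elim: n => [|n IHn] /=; [constructor | apply: walk_cat Ww IHn]. Qed.

Definition visits p w q r := exists x y, [/\ w = x ++ y, walk T p x r & walk T r y q].

Definition has_loop p w q := exists w1 w2 w3 r,
  [/\ w = w1 ++ w2 ++ w3, w2 <> [::], walk T p w1 r, walk T r w2 r & walk T r w3 q].

Lemma has_loop_in (A : {set K}) p w q : walk T p w q ->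
  (forall r, visits p w q r -> r \in A) -> #|A| <= size w -> has_loop p w q.
Proof.
elim: w A p => [|e w IHw] A p Ww inA.
  have pA : p \in A by apply: inA; exists [::], [::]; split=> //; constructor.
  by rewrite leqn0 => /eqP/cards0_eq A0; rewrite A0 inE in pA.
case/walk_consE: Ww => q' Te Wwq.
have pA : p \in A.
  by apply: inA; exists [::], (e :: w); split=> //; [constructor | apply: walk_cons Te Wwq].
have [[x [y [-> Wx Wy]]] | p_once] := classic (visits q' w q p).
  by exists [::], (e :: x), y, p; split=> //; [constructor | apply: walk_cons Te Wx].
rewrite (cardsD1 p) pA add1n ltnS => leAw.
have [w1 [w2 [w3 [r [-> nz Ww1 Ww2 Ww3]]]]] : has_loop q' w q.
  apply: (IHw (A :\ p)) => // r [x [y [Exy Wx Wy]]].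
  rewrite !inE; apply/andP; split.
    by apply/eqP=> Erp; subst r; apply: p_once; exists x, y.
  by apply: inA; exists (e :: x), y; split; [rewrite Exy | apply: walk_cons Te Wx |].
by exists (e :: w1), w2, w3, r; split=> //; apply: walk_cons Te Ww1.
Qed.

Lemma walk_has_loop p w q : walk T p w q -> #|K| <= size w -> has_loop p w q.
Proof. by move=> Ww; rewrite -cardsT; apply: has_loop_in => // r; rewrite inE. Qed.

Lemma walk_shorten p w q : walk T p w q -> exists w', walk T p w' q /\ size w' < #|K|.
Proof.
have [n] := ubnP (size w); elim: n => // n IHn in w *; rewrite ltnS => le_wn Ww.
have [lt_wK | le_Kw] := ltnP (size w) #|K|; first by exists w.
have [w1 [w2 [w3 [r [Ew nz Ww1 _ Ww3]]]]] := walk_has_loop Ww le_Kw.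
apply: (IHn (w1 ++ w3)); last exact: walk_cat Ww1 Ww3.
have : 0 < size w2 by case: (w2) nz.
by move: le_wn; rewrite Ew !size_cat; lia.
Qed.

Definition isSnd (e : act S R) : bool := if e is Snd _ then true else false.
Definition isRcv (e : act S R) : bool := if e is Rcv _ then true else false.

Lemma sends_cat (x y : seq (act S R)) : sends (x ++ y) = sends x ++ sends y.
Proof. exact: pmap_cat. Qed.

Lemma recvs_cat (x y : seq (act S R)) : recvs (x ++ y) = recvs x ++ recvs y.
Proof. exact: pmap_cat. Qed.

Lemma size_sends (w : seq (act S R)) : size (sends w) = count isSnd w.
Proof. by elim: w => [|[s|r] w IHw] //=; rewrite IHw. Qed.

Lemma size_recvs (w : seq (act S R)) : size (recvs w) = count isRcv w.
Proof. by elim: w => [|[s|r] w IHw] //=; rewrite IHw. Qed.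

Lemma sends_map_Rcv (v : seq R) : sends (map (@Rcv S R) v) = [::].
Proof. by elim: v. Qed.

Lemma recvs_map_Rcv (v : seq R) : recvs (map (@Rcv S R) v) = v.
Proof. by elim: v => //= r v ->. Qed.

Lemma map_Snd_sends (w : seq (act S R)) : all isSnd w -> map Snd (sends w) = w.
Proof. by elim: w => [|[s|r] w IHw] //= /IHw ->. Qed.

Lemma map_Rcv_recvs (w : seq (act S R)) : all isRcv w -> map Rcv (recvs w) = w.
Proof. by elim: w => [|[s|r] w IHw] //= /IHw ->. Qed.

Lemma loop_of_run (P : pred (act S R)) p w q : walk T p w q -> all P w ->
  #|K| <= size w -> exists r v, [/\ v <> [::], all P v & walk T r v r].
Proof.
move=> Ww Pw /(walk_has_loop Ww) [w1 [w2 [w3 [r [Ew nz _ Ww2 _]]]]].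
by exists r, w2; split=> //; move: Pw; rewrite Ew !all_cat => /and3P[].
Qed.

Lemma send_cycle_of_run p w q : walk T p w q -> all isSnd w -> #|K| <= size w ->
  send_cycle T.
Proof.
move=> Ww Sw /(loop_of_run Ww Sw) [r [v [nz Sv Wv]]].
exists r, (sends v); rewrite map_Snd_sends //; split=> // v0.
by apply: nz; rewrite -(map_Snd_sends Sv) v0.
Qed.

Lemma recv_cycle_of_run p w q : walk T p w q -> all isRcv w -> #|K| <= size w ->
  recv_cycle T.
Proof.
move=> Ww Rw /(loop_of_run Ww Rw) [r [v [nz Rv Wv]]].
exists r, (recvs v); rewrite map_Rcv_recvs //; split=> // v0.
by apply: nz; rewrite -(map_Rcv_recvs Rv) v0.
Qed.

Lemma SR_step_agree p e q e' q' w w' x y : SR_machine T ->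
  T p e q -> T p e' q' ->
  sends (e' :: w') = sends (e :: w) ++ y -> recvs (e' :: w') = recvs (e :: w) ++ x ->
  [/\ e' = e, q' = q, sends w' = sends w ++ y & recvs w' = recvs w ++ x].
Proof.
case=> kind _ det Te Te' Es Er.
have Ee : e' = e.
  case: (kind p) => nK; case: e Te Es Er => [s|r] Te; case: e' Te' => [s'|r'] Te' /=;
    try by [case: (nK _ _ Te) | case: (nK _ _ Te')].
  - by case=> ->.
  - by move=> _ [->].
subst e'; split=> //; first exact: det Te' Te.
  by case: e {Te Te'} Es Er => /= [s [] | r].
by case: e {Te Te'} Es Er => /= [s | r _ []].
Qed.

Lemma SR_walk_prefix p u r w q x y : SR_machine T -> walk T p u r -> walk T p w q ->
  sends w = sends u ++ y -> recvs w = recvs u ++ x ->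
  exists w', [/\ w = u ++ w', walk T r w' q, sends w' = y & recvs w' = x].
Proof.
move=> SR Wu; elim: Wu w => [{}p | {}p e q' u' r' Te _ IHu] w Ww Es Er.
  by exists w.
case: w Ww Es Er => [|e' w']; first by case: e {Te}.
case/walk_consE=> q'' Te' Ww' Es Er.
have [-> Eq Es' Er'] := SR_step_agree SR Te Te' Es Er; subst q''.
by have [w'' [-> *]] := IHu _ Ww' Es' Er'; exists w''.
Qed.

End Walks.

Arguments isSnd {S R}.
Arguments isRcv {S R}.

Section Runs.
Variables (A : Type) (P Q : pred A) (k : nat).
Hypothesis PorQ : forall a, P a || Q a.

(* [m] is the length of a P-run immediately preceding [w]. *)
Lemma long_run_or_prefix m w : (count Q w).+1 * (k - 1) < m + count P w ->
  (exists b c, [/\ w = b ++ c, all P b & k <= m + size b]) \/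
  exists a b c, [/\ w = a ++ b ++ c, all P b & k <= size b].
Proof.
elim: w m => [|e w IHw] m /=.
  by rewrite addn0 mul1n => lt_km; left; exists [::], [::]; split=> //; lia.
case Pe: (P e) => /= lt_m.
  have [|[b [c [-> Pb le_k]]] | [a [b [c [-> Pb le_k]]]] ] := IHw m.+1.
  - by nia.
  - by left; exists (e :: b), c; rewrite /= Pe; split=> //; lia.
  - by right; exists (e :: a), b, c.
have Qe : Q e by have := PorQ e; rewrite Pe.
have [le_km | lt_mk] := leqP k m.
  by left; exists [::], (e :: w); split=> //; lia.
have [|[b [c [-> Pb le_k]]] | [a [b [c [-> Pb le_k]]]] ] := IHw 0.
- by move: lt_m; rewrite Qe; nia.
- by right; exists [:: e], b, c.
- by right; exists (e :: a), b, c.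
Qed.

Lemma long_run w : (count Q w).+1 * (k - 1) < count P w ->
  exists a b c, [/\ w = a ++ b ++ c, all P b & k <= size b].
Proof.
move=> lt_w; have [[b [c [-> Pb le_k]]] | //] := long_run_or_prefix (m := 0) lt_w.
by exists [::], b, c.
Qed.

End Runs.

Section Pair.
Variables (Ma Mb K0 K1 : finType) (h0 : K0) (h1 : K1)
  (T0 : K0 -> act Ma Mb -> K0 -> Prop) (T1 : K1 -> act Mb Ma -> K1 -> Prop).
Hypotheses (SR0 : SR_machine T0) (SR1 : SR_machine T1) (aff : affine h0 h1 T0 T1).

Lemma reachable_walks g : reachable h0 h1 T0 T1 g ->
  exists u0 u1, [/\ walk T0 h0 u0 g.1.1, walk T1 h1 u1 g.1.2,
    sends u0 = recvs u1 ++ g.2.1 & sends u1 = recvs u0 ++ g.2.2].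
Proof.
elim=> [|{}g g' _ [u0 [u1 [W0 W1 E0 E1]]] step].
  by exists [::], [::]; split=> //; constructor.
case: step W0 W1 E0 E1 => /= [p0 q0 p1 a | p0 q0 p1 b | p0 p1 q1 b | p0 p1 q1 a] xa xb
  Te W0 W1 E0 E1; [exists (rcons u0 (Snd a)), u1 | exists (rcons u0 (Rcv b)), u1
  | exists u0, (rcons u1 (Snd b)) | exists u0, (rcons u1 (Rcv a))];
  split; try exact: walk_rcons Te;
  by rewrite -?cats1 ?sends_cat ?recvs_cat /= ?cats0 ?E0 ?E1 -?catA.
Qed.

Lemma recv_cycle_of_backlog p0 p1 xa :
  reachable h0 h1 T0 T1 ((p0, p1), (xa, [::])) ->
  #|K0| * (#|K1| - 1) + 1 <= size xa -> recv_cycle T1.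
Proof.
move=> reach big; have [u0 [u1 [/= W0 W1 E0]]] := reachable_walks reach.
rewrite /= cats0 => E1.
have [v0 [Wv0 short_v0]] : exists v, walk T0 p0 v h0 /\ size v < #|K0|.
  by case: SR0 => _ conn _; have [v /walk_shorten] := conn p0 h0.
have [w1 [Ww1 [Rw1 Sw1]]] : Z1 h1 T1 (sends (u0 ++ v0)) (recvs (u0 ++ v0)).
  by apply/aff; exists (u0 ++ v0); split=> //; apply: walk_cat W0 Wv0.
have [r1 [_ Wr1 Sr1 Rr1]] := SR_walk_prefix (x := xa ++ sends v0) (y := recvs v0) SR1 W1 Ww1
  ltac:(by rewrite Sw1 recvs_cat E1) ltac:(by rewrite Rw1 sends_cat E0 catA).
have [|a [b [c [Er1 Rb long_b]]]] :=
    @long_run (act Mb Ma) isRcv isSnd #|K1| ltac:(by case) r1.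
  rewrite -size_sends -size_recvs Sr1 Rr1 size_cat.
  have short_rv0 : size (recvs v0) < #|K0|.
    by rewrite (leq_ltn_trans _ short_v0) // size_recvs count_size.
  by move: (leq_mul short_rv0 (leqnn (#|K1| - 1))); lia.
rewrite Er1 in Wr1; have [q [_ /walk_split [q' [Wb _]]]] := walk_split Wr1.
exact: recv_cycle_of_run Wb Rb long_b.
Qed.

Lemma send_cycle_of_recv_cycle : recv_cycle T1 -> send_cycle T0.
Proof.
case=> q [v [nz_v Wv]].
have [[a Wa] [b Wb]] : (exists a, walk T1 h1 a q) /\ exists b, walk T1 q b h1.
  by case: SR1 => _ conn _; split; apply: conn.
pose m := size (sends a ++ sends b); pose c := flatten (nseq (m.+1 * #|K0|) v).
have Wc : walk T1 q (map Rcv c) q by rewrite map_flatten map_nseq; apply: walk_iter.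
have [z [Wz [Sz Rz]]] : Z0 h0 T0 (recvs (a ++ map Rcv c ++ b)) (sends (a ++ map Rcv c ++ b)).
  by apply/aff; exists (a ++ map Rcv c ++ b); split=> //; apply: walk_cat Wa (walk_cat Wc Wb).
have long_c : m.+1 * #|K0| <= size c.
  by rewrite size_flatten /shape map_nseq sumn_nseq leq_pmull // lt0n size_eq0; apply/eqP.
have [|x [y [t [Ez Sy long_y]]]] := @long_run (act Ma Mb) isSnd isRcv #|K0| ltac:(by case) z.
  rewrite -size_sends -size_recvs Sz Rz !recvs_cat !sends_cat sends_map_Rcv recvs_map_Rcv.
  have K0_gt0 : 0 < #|K0| by apply/card_gt0P; exists h0.
  have : m.+1 * (#|K0| - 1) < m.+1 * #|K0| by rewrite ltn_pmul2l //; lia.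
  by move: long_c; rewrite /m !size_cat; lia.
rewrite Ez in Wz; have [r [_ /walk_split [r' [Wy _]]]] := walk_split Wz.
exact: send_cycle_of_run Wy Sy long_y.
Qed.

End Pair.

Theorem lemma6p2 (Ma Mb K0 K1 : finType) (h0 : K0) (h1 : K1)
  (T0 : K0 -> act Ma Mb -> K0 -> Prop) (T1 : K1 -> act Mb Ma -> K1 -> Prop) :
  SR_machine T0 -> SR_machine T1 -> affine h0 h1 T0 T1 ->
  forall (p0 : K0) (p1 : K1) (xa : seq Ma),
    reachable h0 h1 T0 T1 ((p0, p1), (xa, [::])) ->
    #|K0| * (#|K1| - 1) + 1 <= size xa ->
    recv_cycle T1 /\ send_cycle T0.
Proof.
move=> SR0 SR1 aff p0 p1 xa reach big.
have recv1 := recv_cycle_of_backlog SR0 SR1 aff reach big.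
by split; last exact: send_cycle_of_recv_cycle SR1 aff recv1.
Qed.
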